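(* Let $\mathcal{T}$ obey the LC-PF model and covariance assumption of the context. 1. If node $b$ is the parent of nodes $a$ and $c$, then $\phi_{ab}=\sum_{d\in\mathcal{D}^a}\big(r_{ab}^2\Omega_p(d,d)+x_{ab}^2\Omega_q(d,d)+2r_{ab}x_{ab}\Omega_{pq}(d,d)\big)$ and $\phi_{ac}=\sum_{d\in\mathcal{D}^a}\big(r_{ab}^2\Omega_p(d,d)+x_{ab}^2\Omega_q(d,d)+2r_{ab}x_{ab}\Omega_{pq}(d,d)\big)+\sum_{d\in\mathcal{D}^c}\big(r_{bc}^2\Omega_p(d,d)+x_{bc}^2\Omega_q(d,d)+2r_{bc}x_{bc}\Omega_{pq}(d,d)\big)$. 2. If node $g$ is the parent of node $b$, and $b$ is the parent of nodes $a$ and $c$, then $\phi_{ag}-\phi_{cg}=\sum_{d\in\mathcal{D}^a}\big[\Omega_p(d,d)(r_{ab}^2+2r_{ab}r_{bg})+\Omega_q(d,d)(x_{ab}^2+2x_{ab}x_{bg})+2\Omega_{pq}(d,d)(r_{ab}x_{ab}+r_{bg}x_{ab}+r_{ab}x_{bg})\big]-\sum_{d\in\mathcal{D}^c}\big[\Omega_p(d,d)(r_{cb}^2+2r_{cb}r_{bg})+\Omega_q(d,d)(x_{cb}^2+2x_{cb}x_{bg})+2\Omega_{pq}(d,d)(r_{cb}x_{cb}+r_{bg}x_{cb}+r_{cb}x_{bg})\big]$, $\phi_{ag}=\sum_{d\in\mathcal{D}^a}\big[\Omega_p(d,d)(r_{ab}+r_{bg})^2+2\Omega_{pq}(d,d)(r_{ab}+r_{bg})(x_{ab}+x_{bg})+\Omega_q(d,d)(x_{ab}+x_{bg})^2\big]+\sum_{d\in\mathcal{D}^b\setminus\mathcal{D}^a}\big[\Omega_p(d,d)r_{bg}^2+\Omega_q(d,d)x_{bg}^2+2\Omega_{pq}(d,d)r_{bg}x_{bg}\big]$,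 $\phi^\theta_{ag}=\sum_{d\in\mathcal{D}^a}\big[\Omega_p(d,d)(x_{ab}+x_{bg})^2-2\Omega_{pq}(d,d)(r_{ab}+r_{bg})(x_{ab}+x_{bg})+\Omega_q(d,d)(r_{ab}+r_{bg})^2\big]+\sum_{d\in\mathcal{D}^b\setminus\mathcal{D}^a}\big[\Omega_p(d,d)x_{bg}^2+\Omega_q(d,d)r_{bg}^2-2\Omega_{pq}(d,d)r_{bg}x_{bg}\big]$, $\phi^{v\theta}_{ag}=\sum_{d\in\mathcal{D}^a}\big[(\Omega_p(d,d)-\Omega_q(d,d))(r_{ab}+r_{bg})(x_{ab}+x_{bg})+\Omega_{pq}(d,d)(x_{ab}+x_{bg})^2-\Omega_{pq}(d,d)(r_{ab}+r_{bg})^2\big]+\sum_{d\in\mathcal{D}^b\setminus\mathcal{D}^a}\big[(\Omega_p(d,d)-\Omega_q(d,d))r_{bg}x_{bg}+\Omega_{pq}(d,d)(x_{bg}^2-r_{bg}^2)\big]$.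
   Context: $\mathcal{T}=(\mathcal{V},\mathcal{E})$ is a tree with a distinguished root (substation) of degree one. Each edge $(ab)$ has resistance $r_{ab}=r_{ba}>0$ and reactance $x_{ab}=x_{ba}>0$. For a node $a$, $\mathcal{P}^a$ is the set of edges on the path from $a$ to the root. The descendant set $\mathcal{D}^a$ is the set of nodes $c$ with $\mathcal{P}^a\subseteq\mathcal{P}^c$, including $a$. If $a\in\mathcal{D}^b$ and $(ab)\in\mathcal{E}$, then $b$ is the parent of $a$. Let $H_{1/r},H_{1/x}$ be the weighted Laplacians of $\mathcal{T}$ with edge weights $1/r_{ab}$, $1/x_{ab}$, with the root row and column removed. Non-root nodes have random injections $p_a,q_a$. The LC-PF model gives the voltage magnitude deviations $v=H_{1/r}^{-1}p+H_{1/x}^{-1}q$ and phases $\theta=H_{1/x}^{-1}p-H_{1/r}^{-1}q$ at non-root nodes; the root magnitude and phase are constants. Covariance assumption: $\Omega_p,\Omega_q$ are the covariances of $p,q$, and $\Omega_{pq}=\mathbb{E}[(p-\mathbb{E}p)(q-\mathbb{E}q)^T]=\Omega_{qp}^T$. For distinct non-root $a,b$, $\Omega_p(a,b)=\Omega_q(a,b)=\Omega_{qp}(a,b)=0$, and $\Omega_{qp}(a,a)\ge0$. Writing $\tilde v_a=v_a-\mathbb{E}v_a$ and $\tilde\theta_a=\theta_a-\mathbb{E}\theta_a$, define: - $\phi_{ab}=\mathbb{E}[(\tilde v_a-\tilde v_b)^2]$, - $\phi^\theta_{ab}=\mathbb{E}[(\tilde\theta_a-\tilde\theta_b)^2]$,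 - $\phi^{v\theta}_{ab}=\mathbb{E}[(\tilde v_a-\tilde v_b)(\tilde\theta_a-\tilde\theta_b)]$. *)

From HB Require Import structures.
From mathcomp Require Import all_boot all_order all_algebra.
From mathcomp Require Import all_classical all_reals all_analysis.
Set Implicit Arguments. Unset Strict Implicit. Unset Printing Implicit Defensive.
Import Order.TTheory GRing.Theory Num.Theory.
Local Open Scope ring_scope.

(* The node set is 'I_n.+1, the root (substation) is ord0.  The tree is     *)
(* given by a parent map [par]; its edge set is                             *)
(*    E = { {c, par c} | c <> root },                                      *)
(* and it is a tree rooted at ord0 iff every node reaches ord0 by iterating *)
(* [par] (with the normalising convention par root = root).                 *)

Definition tedge (n : nat) (par : 'I_n.+1 -> 'I_n.+1) (a b : 'I_n.+1) : bool :=
  ((a != ord0) && (par a == b)) || ((b != ord0) && (par b == a)).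

Definition rooted_tree (n : nat) (par : 'I_n.+1 -> 'I_n.+1) : Prop :=
  par ord0 = ord0 /\ (forall a : 'I_n.+1, exists k : nat, iter k par a = ord0).

Definition root_deg_one (n : nat) (par : 'I_n.+1 -> 'I_n.+1) : Prop :=
  #|[set c | tedge par ord0 c]| = 1%N.

(* P^a : the set of edges (as unordered pairs) on the path from a to the root *)
Definition path_edges (n : nat) (par : 'I_n.+1 -> 'I_n.+1) (a : 'I_n.+1)
  : {set {set 'I_n.+1}} :=
  [set [set c; par c] | c in
     [set c | (c != ord0) && [exists k : 'I_n.+1, iter k par a == c]]].

Definition desc (n : nat) (par : 'I_n.+1 -> 'I_n.+1) (a : 'I_n.+1)
  : {set 'I_n.+1} :=
  [set c | path_edges par a \subset path_edges par c].

Definition is_parent (n : nat) (par : 'I_n.+1 -> 'I_n.+1) (b a : 'I_n.+1)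
  : bool := tedge par a b && (a \in desc par b).

(* Weighted Laplacians (edge weights 1/w_ab) and their reduced versions     *)
(* (root row and column removed; non-root node [lift ord0 i] <-> i : 'I_n). *)

Definition laplacian (R : realType) (n : nat) (par : 'I_n.+1 -> 'I_n.+1)
  (w : 'I_n.+1 -> 'I_n.+1 -> R) : 'M[R]_n.+1 :=
  \matrix_(i, j) (if i == j then \sum_(k | tedge par i k) (w i k)^-1
                  else if tedge par i j then - (w i j)^-1 else 0).

Definition red_laplacian (R : realType) (n : nat) (par : 'I_n.+1 -> 'I_n.+1)
  (w : 'I_n.+1 -> 'I_n.+1 -> R) : 'M[R]_n :=
  \matrix_(i, j) laplacian par w (lift ord0 i) (lift ord0 j).

(* LC-PF model.  p, q : node -> random variable (only non-root values used). *)

Definition lcpf_v {d} {T : measurableType d} (R : realType) (n : nat)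
  (par : 'I_n.+1 -> 'I_n.+1) (r x : 'I_n.+1 -> 'I_n.+1 -> R)
  (p q : 'I_n.+1 -> T -> R) (v0 : R) (a : 'I_n.+1) : T -> R :=
  fun w => match unlift ord0 a with
           | Some i => \sum_(j < n) invmx (red_laplacian par r) i j * p (lift ord0 j) w
                     + \sum_(j < n) invmx (red_laplacian par x) i j * q (lift ord0 j) w
           | None => v0
           end.

Definition lcpf_theta {d} {T : measurableType d} (R : realType) (n : nat)
  (par : 'I_n.+1 -> 'I_n.+1) (r x : 'I_n.+1 -> 'I_n.+1 -> R)
  (p q : 'I_n.+1 -> T -> R) (th0 : R) (a : 'I_n.+1) : T -> R :=
  fun w => match unlift ord0 a with
           | Some i => \sum_(j < n) invmx (red_laplacian par x) i j * p (lift ord0 j) w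
                     - \sum_(j < n) invmx (red_laplacian par r) i j * q (lift ord0 j) w
           | None => th0
           end.

Definition centred {d} {T : measurableType d} {R : realType}
  (P : probability T R) (X : T -> R) : T -> R :=
  X \- cst (fine ('E_P[X])%E).

(* phi^{XY}_{ab} = E[ (X~_a - X~_b) (Y~_a - Y~_b) ];
   phi = phiE v v, phi^theta = phiE th th, phi^{v theta} = phiE v th *)
Definition phiE {d} {T : measurableType d} {R : realType} {V : Type}
  (P : probability T R) (X Y : V -> T -> R) (a b : V) : \bar R :=
  ('E_P[(centred P (X a) \- centred P (X b)) * (centred P (Y a) \- centred P (Y b))])%E.

Definition Omega {d} {T : measurableType d} {R : realType} {V : Type}
  (P : probability T R) (X Y : V -> T -> R) (a b : V) : \bar R :=
  covariance P (X a) (Y b).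

(* The inverse of the reduced Laplacian of a rooted tree is explicit: its entry (a, d)
   is the total weight of the edges shared by the root paths of a and d.  Checking this
   row by row comes down to the fact that exactly one child of a strict ancestor u of d
   lies on the root path of d.  Hence v_a - v_g and theta_a - theta_g are linear
   combinations of the injections p_d, q_d whose coefficients are the weights of the
   edges of P^a \ P^g lying on P^d; for a child a of b and a child b of g they are
   w_ab 1[d in D^a] + w_bg 1[d in D^b].  As injections at distinct nodes are
   uncorrelated, every phi is a sum over single nodes d of a quadratic form in these
   coefficients weighted by the covariances Omega(d, d), and the formulas follow by
   cases on the membership of d in D^a, D^b and D^c. *)

From HB Require Import structures.
From mathcomp Require Import all_boot all_order all_algebra.
From mathcomp Require Import all_classical all_reals all_analysis.
From mathcomp Require Import ring.
Import Order.TTheory GRing.Theory Num.Theory.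
Local Open Scope ring_scope.
Set Implicit Arguments. Unset Strict Implicit. Unset Printing Implicit Defensive.

Section RootedTree.
Variables (n : nat) (par : 'I_n.+1 -> 'I_n.+1).
Hypothesis par0 : par ord0 = ord0.
Hypothesis reach : forall a, exists k, iter k par a = ord0.

Lemma iter_par_root k : iter k par ord0 = ord0.
Proof. by elim: k => //= k ->. Qed.

Lemma iter_par_periodic a k : (0 < k)%N -> iter k par a = a -> a = ord0.
Proof.
move=> k_gt0 ak; have [m am] := reach a.
have akm : iter (k * m) par a = a.
  by elim: m {am} => [|m IHm]; rewrite ?muln0 // mulnS iterD IHm ak.
by rewrite -akm -(subnK (leq_pmull m k_gt0)) iterD am iter_par_root.
Qed.

Lemma par_fixed_root a : par a = a -> a = ord0.
Proof. exact: (@iter_par_periodic a 1). Qed.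

Lemma par_par_neq c : c != ord0 -> par (par c) != c.
Proof.
by apply: contraNneq => ppc; apply/eqP/(@iter_par_periodic c 2).
Qed.

Lemma fconnect_root c : fconnect par ord0 c = (c == ord0).
Proof.
apply/idP/eqP => [/iter_findex <- | ->]; [exact: iter_par_root | exact: connect0].
Qed.

Lemma fconnect_antisym a c : fconnect par a c -> fconnect par c a -> a = c.
Proof.
move=> /iter_findex ac /iter_findex ca.
have aji : iter (findex par c a + findex par a c) par a = a by rewrite iterD ac ca.
case: (posnP (findex par a c)) ac => [-> // | i_gt0 ac].
by rewrite -ac (iter_par_periodic (leq_trans i_gt0 (leq_addl _ _)) aji) iter_par_root.
Qed.

Lemma fconnect_par_self c : c != ord0 -> fconnect par (par c) c = false.
Proof.
move=> c0; apply/negbTE/negP => /(fconnect_antisym (fconnect1 par c)) /esym.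
by move/par_fixed_root/eqP; apply/negP.
Qed.

Lemma fconnect_total d a c :
  fconnect par d a -> fconnect par d c -> fconnect par a c || fconnect par c a.
Proof.
move=> /iter_findex da /iter_findex dc.
case: (leqP (findex par d a) (findex par d c)) => [le_ac | /ltnW le_ca].
  by rewrite -dc -(subnK le_ac) iterD da fconnect_iter.
by rewrite -da -(subnK le_ca) iterD dc fconnect_iter orbT.
Qed.

Lemma fconnect_sibling b b' :
  b != b' -> b' != ord0 -> par b = par b' -> fconnect par b b' = false.
Proof.
move=> bb' b'0 pbb'.
by rewrite fconnect_eqVf (negbTE bb') pbb' fconnect_par_self.
Qed.

Lemma fconnect_bounded a c :
  [exists k : 'I_n.+1, iter k par a == c] = fconnect par a c.
Proof.
apply/existsP/idP => [[k /eqP <-] | ac]; first exact: fconnect_iter.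
have lt_n : (findex par a c < n.+1)%N.
  by apply: leq_trans (findex_max ac) _; rewrite -{2}(card_ord n.+1) max_card.
by exists (Ordinal lt_n); rewrite iter_findex.
Qed.

Lemma path_edge_inj c c' : c != ord0 -> [set c; par c] = [set c'; par c'] -> c = c'.
Proof.
move=> c0 cc'.
have : c \in [set c'; par c'] by rewrite -cc' set21.
rewrite !inE => /orP[/eqP // | /eqP c_par].
have : c' \in [set c; par c] by rewrite cc' set21.
rewrite !inE => /orP[/eqP -> // | /eqP c'_par].
by case/eqP: (par_par_neq c0); rewrite -c'_par -c_par.
Qed.

Lemma desc_fconnect a d : a != ord0 -> (d \in desc par a) = fconnect par d a.
Proof.
move=> a0; rewrite inE; apply/fintype.subsetP/idP => [sub | da e].
  have : [set a; par a] \in path_edges par a.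
    by apply: imset_f; rewrite inE a0 fconnect_bounded connect0.
  case/sub/imsetP => c; rewrite inE fconnect_bounded => /andP[_ dc].
  by move/(path_edge_inj a0) ->.
case/imsetP => c; rewrite inE fconnect_bounded => /andP[c0 ac] ->.
by apply: imset_f; rewrite inE c0 fconnect_bounded (connect_trans da ac).
Qed.

Lemma desc_nonroot a : a != ord0 -> ord0 \notin desc par a.
Proof. by move=> a0; rewrite desc_fconnect // fconnect_root. Qed.

Lemma is_parentP b a : is_parent par b a -> a != ord0 /\ par a = b.
Proof.
rewrite /is_parent /tedge => /andP[/orP[/andP[a0 /eqP pa] _ | /andP[b0 /eqP ba]]]//.
rewrite desc_fconnect // => ab.
have ab' : a = b by apply: (fconnect_antisym ab); rewrite -ba fconnect1.
have bb : par b = b by rewrite ba ab'.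
by rewrite (par_fixed_root bb) eqxx in b0.
Qed.

Lemma desc_subset_parent b a : b != ord0 -> is_parent par b a -> desc par a \subset desc par b.
Proof.
move=> b0 /is_parentP[a0 pa]; subst b; apply/fintype.subsetP => d.
by rewrite !desc_fconnect // => /connect_trans; apply; apply: fconnect1.
Qed.

Lemma fconnect_siblings d b b' : b != b' -> b != ord0 -> b' != ord0 -> par b = par b' ->
  fconnect par d b && fconnect par d b' = false.
Proof.
move=> bb' b0 b'0 pbb'; apply/negbTE/negP => /andP[db db'].
case/orP: (fconnect_total db db'); first by rewrite fconnect_sibling.
by rewrite fconnect_sibling // eq_sym.
Qed.

Lemma desc_siblings_disjoint a c : a != c -> a != ord0 -> c != ord0 -> par a = par c ->
  [disjoint desc par a & desc par c].
Proof.
move=> ac a0 c0 pac; apply/pred0P => d /=.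
by rewrite !desc_fconnect // fconnect_siblings.
Qed.

Lemma tedge_irr u : tedge par u u = false.
Proof.
rewrite /tedge orbb; apply/negbTE/negP => /andP[u0 /eqP/par_fixed_root u_root].
by rewrite u_root eqxx in u0.
Qed.

Lemma tedge_par u m : u != ord0 ->
  tedge par u m = (par u == m) || (m != ord0) && (par m == u).
Proof. by move=> u0; rewrite /tedge u0. Qed.

Lemma sum_children_fconnect (R : numDomainType) u d : u != ord0 ->
  \sum_(m | (m != ord0) && (par m == u)) (fconnect par d m)%:R
    = ((u != d) && fconnect par d u)%:R :> R.
Proof.
move=> u0; case: (boolP ((u != d) && fconnect par d u)) => [/andP[ud du] | no_path].
  have i_gt0 : (0 < findex par d u)%N by rewrite lt0n findex_eq0 eq_sym.
  set m0 := iter (findex par d u).-1 par d.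
  have pm0 : par m0 = u by rewrite /m0 -iterS prednK // iter_findex.
  have m00 : m0 != ord0 by apply: contraNneq u0 => m0_root; rewrite -pm0 m0_root par0.
  rewrite (bigD1 m0) /=; last by rewrite m00 pm0 eqxx.
  rewrite fconnect_iter big1 ?addr0 // => m /andP[/andP[m_0 /eqP pm] mm0].
  have := fconnect_siblings d mm0 m_0 m00 (etrans pm (esym pm0)).
  by rewrite fconnect_iter andbT => ->.
rewrite big1 // => m /andP[m0 /eqP pm]; case: (boolP (fconnect par d m)) => // dm.
case/negP: no_path; rewrite -pm (connect_trans dm (fconnect1 par m)) andbT.
by apply: contraTneq dm => <-; rewrite fconnect_par_self.
Qed.

Section CommonPathWeight.
Variables (R : realType) (w : 'I_n.+1 -> 'I_n.+1 -> R).

Definition common_path_weight a d : R :=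
  \sum_(c | [&& c != ord0, fconnect par a c & fconnect par d c]) w c (par c).

Local Notation cpw := common_path_weight.

Lemma common_path_weight_root d : cpw ord0 d = 0.
Proof.
by rewrite /common_path_weight big1 // => c /and3P[c0]; rewrite fconnect_root (negbTE c0).
Qed.

Lemma common_path_weight_par a d : a != ord0 ->
  cpw a d = cpw (par a) d + w a (par a) * (d \in desc par a)%:R.
Proof.
move=> a0; rewrite desc_fconnect // /common_path_weight.
rewrite big_mkcond [X in _ = X + _]big_mkcond (bigD1 a) // [X in _ = X + _](bigD1 a) //=.
rewrite a0 connect0 fconnect_par_self //= add0r addrC; congr (_ + _).
  by apply: eq_bigr => c ca; rewrite [fconnect par a c]fconnect_eqVf (eq_sym a) (negbTE ca).
by case: (fconnect par d a); rewrite ?mulr1 ?mulr0.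
Qed.

Lemma laplacian_mulE u (f : 'I_n.+1 -> R) :
  \sum_k laplacian par w u k * f k = \sum_(m | tedge par u m) (w u m)^-1 * (f u - f m).
Proof.
under eq_bigr do rewrite mxE.
rewrite (bigD1 u) //= eqxx mulr_suml.
rewrite [X in _ + X](eq_bigr (fun k => if tedge par u k then - (w u k)^-1 * f k else 0)).
  rewrite -big_mkcondr (eq_bigl (tedge par u)) => [|k]; last first.
    by case: eqVneq => [->|]; rewrite ?tedge_irr ?andbF ?andbT.
  by rewrite -big_split; apply: eq_bigr => m _; rewrite mulrBr mulNr.
by move=> k ku; rewrite eq_sym (negbTE ku); case: ifP; rewrite ?mul0r.
Qed.

Hypothesis wsym : forall a b, w a b = w b a.
Hypothesis w_neq0 : forall a b, tedge par a b -> w a b != 0.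

Lemma laplacian_mul_common_path_weight u d : u != ord0 ->
  \sum_k laplacian par w u k * cpw k d = (u == d)%:R.
Proof.
move=> u0; rewrite laplacian_mulE (bigD1 (par u)) ?tedge_par ?eqxx //=.
have w_par : w u (par u) != 0 by apply: w_neq0; rewrite tedge_par ?eqxx.
have w_child m : m != ord0 -> par m = u -> w u m != 0.
  by move=> m0 pm; rewrite wsym; apply: w_neq0; rewrite /tedge m0 pm eqxx.
have -> : (w u (par u))^-1 * (cpw u d - cpw (par u) d) = (fconnect par d u)%:R.
  by rewrite (common_path_weight_par _ u0) addrC addKr mulrA mulVf ?mul1r ?desc_fconnect.
rewrite (eq_bigl (fun m => (m != ord0) && (par m == u))) => [|m]; last first.
  rewrite tedge_par // (eq_sym m); case: eqVneq => [<- | _] /=; last by rewrite andbT.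
  by rewrite (negbTE (par_par_neq u0)) andbF.
rewrite (eq_bigr (fun m => - (fconnect par d m)%:R : R)) => [|m /andP[m0 /eqP pm]]; last first.
  rewrite (common_path_weight_par _ m0) pm (wsym m) opprD addrA subrr add0r.
  by rewrite mulrN mulrA mulVf ?w_child ?mul1r ?desc_fconnect.
rewrite sumrN sum_children_fconnect //.
by case: eqVneq => [<- | ud] /=; rewrite ?connect0 ?subr0 ?subrr.
Qed.

Lemma red_laplacian_mul_common_path_weight :
  red_laplacian par w *m \matrix_(i, j) cpw (lift ord0 i) (lift ord0 j) = 1%:M.
Proof.
apply/matrixP => i j; rewrite !mxE.
transitivity (\sum_k laplacian par w (lift ord0 i) k * cpw k (lift ord0 j)).
  rewrite big_ord_recl common_path_weight_root mulr0 add0r.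
  by apply: eq_bigr => k _; rewrite !mxE.
by rewrite laplacian_mul_common_path_weight ?(inj_eq lift_inj) // eq_sym neq_lift.
Qed.

Lemma invmx_red_laplacian :
  invmx (red_laplacian par w) = \matrix_(i, j) cpw (lift ord0 i) (lift ord0 j).
Proof.
have inv := red_laplacian_mul_common_path_weight.
have [unit_L _] := mulmx1_unit inv.
by rewrite -[RHS](mulKmx unit_L) inv mulmx1.
Qed.

Lemma common_path_weight_parent a b d : is_parent par b a ->
  cpw a d = cpw b d + w a b * (d \in desc par a)%:R.
Proof. by case/is_parentP => a0 <-; apply: common_path_weight_par. Qed.

Lemma common_path_weight_grandparent a b g d : is_parent par g b -> is_parent par b a ->
  cpw a d - cpw g d
    = (d \in desc par a)%:R * (w a b + w b g) + (d \in desc par b :\: desc par a)%:R * w b g.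
Proof.
move=> gb ba; have [b0 _] := is_parentP gb; have [a0 pa] := is_parentP ba.
have Dab : (d \in desc par a) ==> (d \in desc par b).
  by apply/implyP/fintype.subsetP/desc_subset_parent.
rewrite (common_path_weight_parent _ ba) (common_path_weight_parent _ gb) finset.in_setD.
by move: Dab; case: (d \in desc par a); case: (d \in desc par b) => //= _; ring.
Qed.

End CommonPathWeight.

End RootedTree.

Section RealCovariance.
Context {dT : measure_display} {T : measurableType dT} {R : realType}.
Variable P : probability T R.
Local Notation L2 := (Lfun P 2%:E).

(* Found by [//] wherever the zmodule structure of [Lfun P 2%:E] is used (e.g. by
   [rpred_sum]): that structure only exists for exponents [1 <= p]. *)
Let one_le_two : (1 <= 2%:E :> \bar R)%E.
Proof. by rewrite lee_fin ler1n. Qed.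

Lemma scale_L2 a X : X \in L2 -> a \o* X \in L2.
Proof. by apply: Lfun_scale; rewrite ler1n. Qed.

Definition cov (X Y : T -> R) : R := fine (covariance P X Y).

Lemma Lfun2_Lfun1 X : X \in L2 -> X \in Lfun P 1.
Proof. exact/Lfun_subset12/fin_num_measure. Qed.

Lemma covariance_cov X Y : X \in L2 -> Y \in L2 -> covariance P X Y = (cov X Y)%:E.
Proof.
move=> X2 Y2; rewrite /cov fineK //.
by apply: covariance_fin_num; [exact: Lfun2_Lfun1 | exact: Lfun2_Lfun1 | exact: Lfun2_mul_Lfun1].
Qed.

Lemma covC X Y : cov X Y = cov Y X.
Proof. by rewrite /cov covarianceC. Qed.

Lemma covDl X Y Z : X \in L2 -> Y \in L2 -> Z \in L2 -> cov (X + Y) Z = cov X Z + cov Y Z.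
Proof. by move=> X2 Y2 Z2; rewrite /cov covarianceDl // !covariance_cov. Qed.

Lemma covZl a X Y : X \in L2 -> Y \in L2 -> cov (a \o* X) Y = a * cov X Y.
Proof.
move=> X2 Y2; rewrite /cov covarianceZl ?covariance_cov //;
  [exact: Lfun2_Lfun1 | exact: Lfun2_Lfun1 | exact: Lfun2_mul_Lfun1].
Qed.

Lemma cov_cstl c Y : cov (cst c) Y = 0.
Proof. by rewrite /cov covariance_cst_l. Qed.

Lemma cov_suml (I : Type) (s : seq I) (F : I -> T -> R) Y :
  (forall i, F i \in L2) -> Y \in L2 -> cov (\sum_(i <- s) F i) Y = \sum_(i <- s) cov (F i) Y.
Proof.
move=> F2 Y2; elim: s => [|i s IHs]; first by rewrite !big_nil -[0]/(cst 0) cov_cstl.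
have S2 : \sum_(j <- s) F j \in L2 by apply: rpred_sum.
by rewrite !big_cons covDl ?IHs ?F2.
Qed.

Lemma phiE_covariance (V : Type) (X Y : V -> T -> R) a b :
  X a \in Lfun P 1 -> X b \in Lfun P 1 -> Y a \in Lfun P 1 -> Y b \in Lfun P 1 ->
  phiE P X Y a b = covariance P (X a \- X b) (Y a \- Y b).
Proof.
move=> Xa Xb Ya Yb.
rewrite /phiE covariance.unlock !expectationB // !fineB ?expectation_fin_num //.
by congr expectation; apply/funext => t; rewrite /centred !fctE /=; ring.
Qed.

Section UncorrelatedCombination.
Variables (n : nat) (X Y : 'I_n -> T -> R).
Hypotheses (X2 : forall j, X j \in L2) (Y2 : forall j, Y j \in L2).

Definition lincomb (al be : 'I_n -> R) (c : R) : T -> R :=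
  \sum_j (al j \o* X j + be j \o* Y j) + cst c.

Lemma lincomb_L2 al be c : lincomb al be c \in L2.
Proof.
apply: rpredD; last exact: Lfun_cst.
by apply: rpred_sum => j _; apply: rpredD; apply: scale_L2.
Qed.

Lemma lincombE al be c t :
  lincomb al be c t = \sum_j (al j * X j t + be j * Y j t) + c.
Proof.
rewrite /lincomb !fctE fct_sumE; congr (_ + _); apply: eq_bigr => j _.
by rewrite fctE /= mulrC [Y j t * _]mulrC.
Qed.

Lemma lincombB al be c al' be' c' :
  lincomb al be c \- lincomb al' be' c' = lincomb (al - al') (be - be') (c - c').
Proof.
apply/funext => t; rewrite /= !lincombE opprD addrACA -sumrB.
by congr (_ + _); apply: eq_bigr => j _; rewrite !fctE; ring.
Qed.

Lemma cov_lincomb_l al be c Z : Z \in L2 ->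
  cov (lincomb al be c) Z = \sum_j (al j * cov (X j) Z + be j * cov (Y j) Z).
Proof.
move=> Z2; have XY2 j : al j \o* X j + be j \o* Y j \in L2 by rewrite rpredD ?scale_L2.
have S2 : \sum_j (al j \o* X j + be j \o* Y j) \in L2 by apply: rpred_sum.
rewrite covDl ?Lfun_cst // cov_cstl addr0 cov_suml //.
by apply: eq_bigr => j _; rewrite covDl ?scale_L2 // !covZl.
Qed.

Hypothesis XX : forall j k, j != k -> cov (X j) (X k) = 0.
Hypothesis YY : forall j k, j != k -> cov (Y j) (Y k) = 0.
Hypothesis YX : forall j k, j != k -> cov (Y j) (X k) = 0.

Lemma cov_lincomb al be c ga de e :
  cov (lincomb al be c) (lincomb ga de e) =
  \sum_j (al j * ga j * cov (X j) (X j) + (al j * de j + be j * ga j) * cov (X j) (Y j)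
          + be j * de j * cov (Y j) (Y j)).
Proof.
have cov_X j : cov (X j) (lincomb ga de e) = ga j * cov (X j) (X j) + de j * cov (X j) (Y j).
  rewrite covC cov_lincomb_l // (bigD1 j) //= big1 ?addr0 => [|k kj].
    by rewrite (covC (Y j)).
  by rewrite XX // YX // !mulr0 addr0.
have cov_Y j : cov (Y j) (lincomb ga de e) = ga j * cov (X j) (Y j) + de j * cov (Y j) (Y j).
  rewrite covC cov_lincomb_l // (bigD1 j) //= big1 ?addr0 => [|k kj].
    by rewrite (covC (X j)).
  by rewrite (covC (X k)) YX 1?eq_sym // YY // !mulr0 addr0.
rewrite cov_lincomb_l ?lincomb_L2 //; apply: eq_bigr => j _.
by rewrite cov_X cov_Y; ring.
Qed.

End UncorrelatedCombination.
End RealCovariance.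

Local Ltac fold_EFin := repeat progress rewrite -?EFinM -?EFinB -?EFinD.

Section LCPF.
Variables (R : realType) (n : nat) (par : 'I_n.+1 -> 'I_n.+1).
Variables (r x : 'I_n.+1 -> 'I_n.+1 -> R).
Variables (dT : measure_display) (T : measurableType dT) (P : probability T R).
Variables (p q : 'I_n.+1 -> T -> R) (v0 th0 : R).
Hypotheses (par0 : par ord0 = ord0) (reach : forall a, exists k, iter k par a = ord0).
Hypotheses (rsym : forall a b, r a b = r b a) (xsym : forall a b, x a b = x b a).
Hypothesis r_neq0 : forall a b, tedge par a b -> r a b != 0.
Hypothesis x_neq0 : forall a b, tedge par a b -> x a b != 0.
Hypothesis pq_L2 : forall a, a != ord0 -> p a \in Lfun P 2%:E /\ q a \in Lfun P 2%:E.
Hypothesis uncorrelated : forall a b, a != ord0 -> b != ord0 -> a != b ->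
  [/\ Omega P p p a b = 0%E, Omega P q q a b = 0%E & Omega P q p a b = 0%E].

Local Notation v := (lcpf_v par r x p q v0).
Local Notation th := (lcpf_theta par r x p q th0).
Local Notation Op d := (Omega P p p d d).
Local Notation Oq d := (Omega P q q d d).
Local Notation Opq d := (Omega P p q d d).

Let pj j := p (lift ord0 j).
Let qj j := q (lift ord0 j).
Let cr a j := common_path_weight par r a (lift ord0 j).
Let cx a j := common_path_weight par x a (lift ord0 j).
Let Cp d := cov P (p d) (p d).
Let Cq d := cov P (q d) (q d).
Let Cpq d := cov P (p d) (q d).

Lemma lift0_neq0 j : lift ord0 j != ord0 :> 'I_n.+1.
Proof. by rewrite eq_sym neq_lift. Qed.

Lemma lincomb_lift_L2 al be c : lincomb pj qj al be c \in Lfun P 2%:E.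
Proof. by apply: lincomb_L2 => j; case: (pq_L2 (lift0_neq0 j)). Qed.

Lemma lincomb_lift_L1 al be c : lincomb pj qj al be c \in Lfun P 1.
Proof. exact/Lfun2_Lfun1/lincomb_lift_L2. Qed.

Lemma lcpf_v_lincomb a : v a = lincomb pj qj (cr a) (cx a) (if a == ord0 then v0 else 0).
Proof.
apply/funext => t; rewrite lincombE /lcpf_v; case: unliftP => [i -> | ->] /=.
  rewrite addr0 -big_split /=.
  by rewrite !invmx_red_laplacian //; apply: eq_bigr => j _; rewrite !mxE.
by rewrite big1 ?add0r // => j _; rewrite /cr /cx !common_path_weight_root // !mul0r addr0.
Qed.

Lemma lcpf_theta_lincomb a :
  th a = lincomb pj qj (cx a) (fun j => - cr a j) (if a == ord0 then th0 else 0).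
Proof.
apply/funext => t; rewrite lincombE /lcpf_theta; case: unliftP => [i -> | ->] /=.
  rewrite addr0 -sumrN -big_split /=.
  by rewrite !invmx_red_laplacian //; apply: eq_bigr => j _; rewrite !mxE mulNr.
by rewrite big1 ?add0r // => j _; rewrite /cr /cx !common_path_weight_root // oppr0 !mul0r addr0.
Qed.

Lemma cov_lift_uncorrelated j k : j != k ->
  [/\ cov P (pj j) (pj k) = 0, cov P (qj j) (qj k) = 0 & cov P (qj j) (pj k) = 0].
Proof.
move=> jk; have [] := uncorrelated (lift0_neq0 j) (lift0_neq0 k).
  by rewrite (inj_eq lift_inj).
by rewrite /Omega /cov => -> -> ->.
Qed.

Lemma cov_lincomb_lift al be c ga de e :
  covariance P (lincomb pj qj al be c) (lincomb pj qj ga de e) =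
  (\sum_j (al j * ga j * Cp (lift ord0 j) + (al j * de j + be j * ga j) * Cpq (lift ord0 j)
           + be j * de j * Cq (lift ord0 j)))%:E.
Proof.
rewrite covariance_cov ?lincomb_lift_L2 // cov_lincomb //.
- by move=> j; case: (pq_L2 (lift0_neq0 j)).
- by move=> j; case: (pq_L2 (lift0_neq0 j)).
- by move=> j k /cov_lift_uncorrelated[].
- by move=> j k /cov_lift_uncorrelated[].
- by move=> j k /cov_lift_uncorrelated[].
Qed.

Lemma phiE_vv a g : phiE P v v a g =
  (\sum_j ((cr a j - cr g j) ^+ 2 * Cp (lift ord0 j)
           + 2 * (cr a j - cr g j) * (cx a j - cx g j) * Cpq (lift ord0 j)
           + (cx a j - cx g j) ^+ 2 * Cq (lift ord0 j)))%:E.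
Proof.
rewrite phiE_covariance !lcpf_v_lincomb ?lincomb_lift_L1 // !lincombB cov_lincomb_lift.
by congr EFin; apply: eq_bigr => j _; rewrite !fctE; ring.
Qed.

Lemma phiE_thth a g : phiE P th th a g =
  (\sum_j ((cx a j - cx g j) ^+ 2 * Cp (lift ord0 j)
           - 2 * (cr a j - cr g j) * (cx a j - cx g j) * Cpq (lift ord0 j)
           + (cr a j - cr g j) ^+ 2 * Cq (lift ord0 j)))%:E.
Proof.
rewrite phiE_covariance !lcpf_theta_lincomb ?lincomb_lift_L1 // !lincombB cov_lincomb_lift.
by congr EFin; apply: eq_bigr => j _; rewrite !fctE; ring.
Qed.

Lemma phiE_vth a g : phiE P v th a g =
  (\sum_j ((cr a j - cr g j) * (cx a j - cx g j) * (Cp (lift ord0 j) - Cq (lift ord0 j))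
           + ((cx a j - cx g j) ^+ 2 - (cr a j - cr g j) ^+ 2) * Cpq (lift ord0 j)))%:E.
Proof.
rewrite phiE_covariance ?lcpf_v_lincomb ?lcpf_theta_lincomb ?lincomb_lift_L1 //.
rewrite !lincombB cov_lincomb_lift.
by congr EFin; apply: eq_bigr => j _; rewrite !fctE; ring.
Qed.

Lemma Omega_diag_EFin d : d != ord0 ->
  [/\ Op d = (Cp d)%:E, Oq d = (Cq d)%:E & Opq d = (Cpq d)%:E].
Proof. by case/pq_L2 => p2 q2; rewrite /Omega !covariance_cov. Qed.

Lemma sum_nonroot_EFin (A : {set 'I_n.+1}) (f : 'I_n.+1 -> R) : ord0 \notin A ->
  (\sum_(d in A) (f d)%:E = (\sum_j (lift ord0 j \in A)%:R * f (lift ord0 j))%:E)%E.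
Proof.
move=> A0; rewrite sumEFin big_mkcond big_ord_recl (negbTE A0) /= add0r.
by congr EFin; apply: eq_bigr => j _; case: (_ \in A); rewrite ?mul1r ?mul0r.
Qed.

Lemma phiE_v_child a b : is_parent par b a ->
  phiE P v v a b =
    (\sum_(d in desc par a)
       ((r a b ^+ 2)%:E * Op d + (x a b ^+ 2)%:E * Oq d + (2 * r a b * x a b)%:E * Opq d))%E.
Proof.
move=> ba; have [a0 _] := is_parentP par0 reach ba.
have Da0 := desc_nonroot par0 reach a0; have /memPn Da := Da0.
under eq_bigr => d /Da d0 do [case: (Omega_diag_EFin d0) => -> -> ->; fold_EFin].
rewrite sum_nonroot_EFin // phiE_vv; congr EFin; apply: eq_bigr => j _.
rewrite /cr /cx !(common_path_weight_parent par0 reach _ _ ba).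
by case: (_ \in _) => /=; ring.
Qed.

Lemma phiE_v_siblings a b c : a != c -> is_parent par b a -> is_parent par b c ->
  phiE P v v a c =
    (\sum_(d in desc par a)
       ((r a b ^+ 2)%:E * Op d + (x a b ^+ 2)%:E * Oq d + (2 * r a b * x a b)%:E * Opq d)
     + \sum_(d in desc par c)
       ((r b c ^+ 2)%:E * Op d + (x b c ^+ 2)%:E * Oq d + (2 * r b c * x b c)%:E * Opq d))%E.
Proof.
move=> ac ba bc; have [a0 pa] := is_parentP par0 reach ba.
have [c0 pc] := is_parentP par0 reach bc.
have Da0 := desc_nonroot par0 reach a0; have /memPn Da := Da0.
have Dc0 := desc_nonroot par0 reach c0; have /memPn Dc := Dc0.
have /pred0P Dac := desc_siblings_disjoint par0 reach ac a0 c0 (etrans pa (esym pc)).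
under eq_bigr => d /Da d0 do [case: (Omega_diag_EFin d0) => -> -> ->; fold_EFin].
under [X in (_ + X)%E]eq_bigr => d /Dc d0 do [case: (Omega_diag_EFin d0) => -> -> ->; fold_EFin].
rewrite !sum_nonroot_EFin // -EFinD -big_split phiE_vv; congr EFin; apply: eq_bigr => j _ /=.
rewrite /cr /cx !(common_path_weight_parent par0 reach _ _ ba).
rewrite !(common_path_weight_parent par0 reach _ _ bc) (rsym c) (xsym c).
move: (Dac (lift ord0 j)) => /=.
by case: (_ \in desc par a); case: (_ \in desc par c) => //= _; ring.
Qed.

Lemma phiE_v_grandparent_sub g b a c : a != c ->
  is_parent par g b -> is_parent par b a -> is_parent par b c ->
  (phiE P v v a g - phiE P v v c g =
     \sum_(d in desc par a)
       (Op d * (r a b ^+ 2 + 2 * r a b * r b g)%:E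
        + Oq d * (x a b ^+ 2 + 2 * x a b * x b g)%:E
        + 2%:E * Opq d * (r a b * x a b + r b g * x a b + r a b * x b g)%:E)
   - \sum_(d in desc par c)
       (Op d * (r c b ^+ 2 + 2 * r c b * r b g)%:E
        + Oq d * (x c b ^+ 2 + 2 * x c b * x b g)%:E
        + 2%:E * Opq d * (r c b * x c b + r b g * x c b + r c b * x b g)%:E))%E.
Proof.
move=> ac gb ba bc; have [b0 _] := is_parentP par0 reach gb.
have [a0 pa] := is_parentP par0 reach ba; have [c0 pc] := is_parentP par0 reach bc.
have Da0 := desc_nonroot par0 reach a0; have /memPn Da := Da0.
have Dc0 := desc_nonroot par0 reach c0; have /memPn Dc := Dc0.
have /pred0P Dac := desc_siblings_disjoint par0 reach ac a0 c0 (etrans pa (esym pc)).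
have Dab d : (d \in desc par a) ==> (d \in desc par b).
  by apply/implyP/fintype.subsetP/desc_subset_parent.
have Dcb d : (d \in desc par c) ==> (d \in desc par b).
  by apply/implyP/fintype.subsetP/desc_subset_parent.
under eq_bigr => d /Da d0 do [case: (Omega_diag_EFin d0) => -> -> ->; fold_EFin].
under [X in _ = (_ - X)%E]eq_bigr => d /Dc d0
  do [case: (Omega_diag_EFin d0) => -> -> ->; fold_EFin].
rewrite !sum_nonroot_EFin // -EFinB !phiE_vv -EFinB -!sumrB; congr EFin.
apply: eq_bigr => j _.
rewrite /cr /cx !(common_path_weight_parent par0 reach _ _ ba).
rewrite !(common_path_weight_parent par0 reach _ _ bc).
rewrite !(common_path_weight_parent par0 reach _ _ gb).
move: (Dac (lift ord0 j)) (Dab (lift ord0 j)) (Dcb (lift ord0 j)) => /=.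
by case: (_ \in desc par a); case: (_ \in desc par b); case: (_ \in desc par c) => //= *; ring.
Qed.

Lemma phiE_grandparent g b a : is_parent par g b -> is_parent par b a ->
  [/\ (phiE P v v a g =
         \sum_(d in desc par a)
           (Op d * ((r a b + r b g) ^+ 2)%:E
            + 2%:E * Opq d * ((r a b + r b g) * (x a b + x b g))%:E
            + Oq d * ((x a b + x b g) ^+ 2)%:E)
       + \sum_(d in desc par b :\: desc par a)
           (Op d * (r b g ^+ 2)%:E + Oq d * (x b g ^+ 2)%:E
            + 2%:E * Opq d * (r b g * x b g)%:E))%E,
      (phiE P th th a g =
         \sum_(d in desc par a)
           (Op d * ((x a b + x b g) ^+ 2)%:E
            - 2%:E * Opq d * ((r a b + r b g) * (x a b + x b g))%:E
            + Oq d * ((r a b + r b g) ^+ 2)%:E)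
       + \sum_(d in desc par b :\: desc par a)
           (Op d * (x b g ^+ 2)%:E + Oq d * (r b g ^+ 2)%:E
            - 2%:E * Opq d * (r b g * x b g)%:E))%E
    & (phiE P v th a g =
         \sum_(d in desc par a)
           ((Op d - Oq d) * ((r a b + r b g) * (x a b + x b g))%:E
            + Opq d * ((x a b + x b g) ^+ 2)%:E
            - Opq d * ((r a b + r b g) ^+ 2)%:E)
       + \sum_(d in desc par b :\: desc par a)
           ((Op d - Oq d) * (r b g * x b g)%:E
            + Opq d * (x b g ^+ 2 - r b g ^+ 2)%:E))%E].
Proof.
move=> gb ba; have [b0 _] := is_parentP par0 reach gb; have [a0 _] := is_parentP par0 reach ba.
have Da0 := desc_nonroot par0 reach a0; have /memPn Da := Da0.
have Dba0 : ord0 \notin desc par b :\: desc par a.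
  by rewrite finset.in_setD (negbTE (desc_nonroot par0 reach b0)) andbF.
have /memPn Dba := Dba0.
split;
  under eq_bigr => d /Da d0 do [case: (Omega_diag_EFin d0) => -> -> ->; fold_EFin];
  under [X in (_ + X)%E]eq_bigr => d /Dba d0 do [case: (Omega_diag_EFin d0) => -> -> ->; fold_EFin];
  rewrite !sum_nonroot_EFin // -EFinD -big_split ?phiE_vv ?phiE_thth ?phiE_vth;
  congr EFin; apply: eq_bigr => j _ /=;
  rewrite /cr /cx !(common_path_weight_grandparent par0 reach _ _ gb ba) finset.in_setD;
  by case: (_ \in desc par a); case: (_ \in desc par b) => /=; ring.
Qed.

End LCPF.

Unset Implicit Arguments.

Theorem theorem6 (R : realType) (n : nat) (par : 'I_n.+1 -> 'I_n.+1)
  (r x : 'I_n.+1 -> 'I_n.+1 -> R)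
  (dT : measure_display) (T : measurableType dT) (P : probability T R)
  (p q : 'I_n.+1 -> T -> R) (v0 th0 : R) :
  rooted_tree par ->
  root_deg_one par ->
  (forall a b, r a b = r b a) -> (forall a b, x a b = x b a) ->
  (forall a b, tedge par a b -> 0 < r a b) ->
  (forall a b, tedge par a b -> 0 < x a b) ->
  (* random injections at non-root nodes, with finite second moments *)
  (forall a, a != ord0 -> p a \in Lfun P 2%:E /\ q a \in Lfun P 2%:E) ->
  (* covariance assumption *)
  (forall a b, a != ord0 -> b != ord0 -> a != b ->
     [/\ Omega P p p a b = 0%E, Omega P q q a b = 0%E & Omega P q p a b = 0%E]) ->
  (forall a, a != ord0 -> (0 <= Omega P q p a a)%E) ->
  let v := lcpf_v par r x p q v0 in
  let th := lcpf_theta par r x p q th0 in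
  let Op := fun d => Omega P p p d d in
  let Oq := fun d => Omega P q q d d in
  let Opq := fun d => Omega P p q d d in
  (* part 1 *)
  (forall a b c, a != c -> is_parent par b a -> is_parent par b c ->
     phiE P v v a b =
       (\sum_(d in desc par a)
          ((r a b ^+ 2)%:E * Op d + (x a b ^+ 2)%:E * Oq d
           + (2 * r a b * x a b)%:E * Opq d))%E
     /\
     phiE P v v a c =
       (\sum_(d in desc par a)
          ((r a b ^+ 2)%:E * Op d + (x a b ^+ 2)%:E * Oq d
           + (2 * r a b * x a b)%:E * Opq d)
        + \sum_(d in desc par c)
          ((r b c ^+ 2)%:E * Op d + (x b c ^+ 2)%:E * Oq d
           + (2 * r b c * x b c)%:E * Opq d))%E)
  /\
  (* part 2 *)
  (forall g b a c, a != c -> is_parent par g b ->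
     is_parent par b a -> is_parent par b c ->
     [/\ (phiE P v v a g - phiE P v v c g =
            \sum_(d in desc par a)
              (Op d * (r a b ^+ 2 + 2 * r a b * r b g)%:E
               + Oq d * (x a b ^+ 2 + 2 * x a b * x b g)%:E
               + 2%:E * Opq d * (r a b * x a b + r b g * x a b + r a b * x b g)%:E)
          - \sum_(d in desc par c)
              (Op d * (r c b ^+ 2 + 2 * r c b * r b g)%:E
               + Oq d * (x c b ^+ 2 + 2 * x c b * x b g)%:E
               + 2%:E * Opq d * (r c b * x c b + r b g * x c b + r c b * x b g)%:E))%E,
         (phiE P v v a g =
            \sum_(d in desc par a)
              (Op d * ((r a b + r b g) ^+ 2)%:E
               + 2%:E * Opq d * ((r a b + r b g) * (x a b + x b g))%:E
               + Oq d * ((x a b + x b g) ^+ 2)%:E)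
          + \sum_(d in desc par b :\: desc par a)
              (Op d * (r b g ^+ 2)%:E + Oq d * (x b g ^+ 2)%:E
               + 2%:E * Opq d * (r b g * x b g)%:E))%E,
         (phiE P th th a g =
            \sum_(d in desc par a)
              (Op d * ((x a b + x b g) ^+ 2)%:E
               - 2%:E * Opq d * ((r a b + r b g) * (x a b + x b g))%:E
               + Oq d * ((r a b + r b g) ^+ 2)%:E)
          + \sum_(d in desc par b :\: desc par a)
              (Op d * (x b g ^+ 2)%:E + Oq d * (r b g ^+ 2)%:E
               - 2%:E * Opq d * (r b g * x b g)%:E))%E
       & (phiE P v th a g =
            \sum_(d in desc par a)
              ((Op d - Oq d) * ((r a b + r b g) * (x a b + x b g))%:E
               + Opq d * ((x a b + x b g) ^+ 2)%:E
               - Opq d * ((r a b + r b g) ^+ 2)%:E)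
          + \sum_(d in desc par b :\: desc par a)
              ((Op d - Oq d) * (r b g * x b g)%:E
               + Opq d * (x b g ^+ 2 - r b g ^+ 2)%:E))%E]).
Proof.
move=> [par0 reach] _ rsym xsym rpos xpos pq_L2 uncorrelated _ v th Op Oq Opq.
have r_neq0 a b : tedge par a b -> r a b != 0 by move/rpos/lt0r_neq0.
have x_neq0 a b : tedge par a b -> x a b != 0 by move/xpos/lt0r_neq0.
split=> [a b c ac ba bc | g b a c ac gb ba bc].
  by split; [apply: phiE_v_child | apply: phiE_v_siblings].
have [] := phiE_grandparent v0 th0 par0 reach rsym xsym r_neq0 x_neq0 pq_L2 uncorrelated gb ba.
by split=> //; apply: phiE_v_grandparent_sub.
Qed.
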